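(* For every positive integer $d$ there exists $c>0$ such that the following holds. Let $G$ be the intersection graph of $n\geq 2$ open axis-parallel boxes in $\mathbb{R}^d$, and let $H$ be a comparability graph on $V(G)$. If $G\cap H$ contains no clique of size $s$, then $\chi(G\cap H)\leq c\,s(\log n)^{d}$.
   Context: An open axis-parallel box in $\mathbb{R}^d$ is a set $\{x\in\mathbb{R}^d: a_i<x_i<b_i \ \forall i\in[d]\}$. The intersection graph of a family of boxes has the boxes as vertices, two being adjacent iff they intersect. A comparability graph is a graph $H$ for which there is a partial order $\prec$ on $V(H)$ such that $\{x,y\}\in E(H)$ iff $x\prec y$ or $y\prec x$. For graphs $G,H$ on the same vertex set, $G\cap H$ is the graph on that vertex set with edge set $E(G)\cap E(H)$. $\chi$ denotes chromatic number. *)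

From Stdlib Require Import Reals.
From mathcomp Require Import all_boot.
Set Implicit Arguments. Unset Strict Implicit. Unset Printing Implicit Defensive.

Definition in_open_box (d : nat) (a b x : 'I_d -> R) : Prop :=
  forall i : 'I_d, Rlt (a i) (x i) /\ Rlt (x i) (b i).

Definition box_graph (d : nat) (T : finType) (a b : T -> 'I_d -> R)
  (u v : T) : Prop :=
  u <> v /\ exists x : 'I_d -> R, in_open_box (a u) (b u) x /\ in_open_box (a v) (b v) x.

Definition comparability_graph (T : finType) (H : T -> T -> Prop) : Prop :=
  exists lt : rel T, irreflexive lt /\ transitive lt /\
    forall x y, H x y <-> (lt x y || lt y x).

Definition graphI (T : Type) (G H : T -> T -> Prop) (u v : T) : Prop :=
  G u v /\ H u v.

Definition has_clique (T : finType) (G : T -> T -> Prop) (s : nat) : Prop :=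
  exists K : {set T}, #|K| = s /\
    forall u v, u \in K -> v \in K -> u != v -> G u v.

Definition colorable (T : finType) (G : T -> T -> Prop) (k : nat) : Prop :=
  exists f : T -> 'I_k, forall u v, G u v -> f u <> f v.

Definition is_chromatic_number (T : finType) (G : T -> T -> Prop) (k : nat) : Prop :=
  colorable G k /\ forall m, colorable G m -> (k <= m)%N.

From Stdlib Require Import Reals Lra.
From mathcomp Require Import all_boot zify.
Set Implicit Arguments. Unset Strict Implicit. Unset Printing Implicit Defensive.

(* Ranking all 2n endpoints of the i-th coordinate intervals turns each box
   into a product of integer intervals (lo, hi] with hi <= 2n, without changing
   which pairs of boxes meet.  Such an interval has a unique point of maximal
   2-adic valuation, its dyadic point, and that valuation (its level) is at most
   log2 (2n).  If two meeting intervals have the same level, their dyadic points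
   coincide (otherwise a multiple of twice the common power of 2 would lie
   between them, inside one of the intervals), while intervals with a common
   dyadic point meet.  Hence among boxes with a given level vector, of which
   there are O(log n)^d, G is a disjoint union of cliques indexed by the dyadic
   point vector.  On each clique G ∩ H is the comparability graph of H, whose
   chains have fewer than s elements, so colouring by the height in H uses s
   colours. *)

Lemma dvdn_double_between P x y : 0 < P -> P %| x -> P %| y -> x < y ->
  exists2 z, x <= z <= y & P * 2 %| z.
Proof.
move=> P0 /dvdnP[i ->] /dvdnP[j ->]; rewrite ltn_pmul2r // => lt_ij.
case: (boolP (odd i)) => odd_i.
- exists (i.+1 * P); first by rewrite !leq_mul2r lt_ij leqnSn !orbT.
  by rewrite [_ * P]mulnC dvdn_mul // dvdn2 /= negbK.
- exists (i * P); first by rewrite leqnn leq_mul2r ltnW ?orbT.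
  by rewrite [_ * P]mulnC dvdn_mul // dvdn2.
Qed.

Lemma dvdn_overlap_eq P lo1 hi1 lo2 hi2 x1 x2 : 0 < P ->
  lo1 < hi2 -> lo2 < hi1 -> lo1 < x1 <= hi1 -> lo2 < x2 <= hi2 ->
  P %| x1 -> P %| x2 ->
  (forall x, lo1 < x <= hi1 -> ~~ (P * 2 %| x)) ->
  (forall x, lo2 < x <= hi2 -> ~~ (P * 2 %| x)) -> x1 = x2.
Proof.
move=> P0; wlog lt12 : lo1 hi1 lo2 hi2 x1 x2 / x1 < x2 => [wlog_lt|].
  move=> *; case: (ltngtP x1 x2) => [lt12|lt21|//].
  - exact: (wlog_lt lo1 hi1 lo2 hi2).
  - by apply/esym; apply: (wlog_lt lo2 hi2 lo1 hi1).
move=> lo1_hi2 lo2_hi1 x1_in x2_in dvd_x1 dvd_x2 no_mult1 no_mult2.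
have [z z_in dvd_z] := dvdn_double_between P0 dvd_x1 dvd_x2 lt12.
case: (leqP z hi1) => z_hi1.
- suff : lo1 < z <= hi1 by move/no_mult1; rewrite dvd_z.
  lia.
- suff : lo2 < z <= hi2 by move/no_mult2; rewrite dvd_z.
  lia.
Qed.

Definition dlevel lo hi : nat := \max_(x < hi.+1 | lo < x) logn 2 x.

(* The least multiple of [2 ^ dlevel lo hi] above [lo]: by [dvdn_dlevelS] the
   only one in (lo, hi]. *)
Definition dpoint lo hi : nat := (lo %/ 2 ^ dlevel lo hi).+1 * 2 ^ dlevel lo hi.

Lemma dlevel_attained lo hi : lo < hi -> exists2 x, lo < x <= hi & 2 ^ dlevel lo hi %| x.
Proof.
move=> lo_hi; pose A := [pred x : 'I_hi.+1 | lo < x].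
have A_ne : 0 < #|A| by apply/card_gt0P; exists ord_max; rewrite inE.
have [x] := eq_bigmax_cond (fun x : 'I_hi.+1 => logn 2 x) A_ne; rewrite inE => lo_x.
rewrite /dlevel (eq_bigl [in A]) => [->|//].
by exists x; [rewrite lo_x -ltnS ltn_ord | exact: pfactor_dvdnn].
Qed.

Lemma dvdn_dlevelS lo hi x : lo < x <= hi -> ~~ (2 ^ dlevel lo hi * 2 %| x).
Proof.
case/andP=> lo_x x_hi; rewrite -expnSr pfactor_dvdn //; last exact: leq_ltn_trans lo_x.
rewrite -ltnNge ltnS.
exact: (@leq_bigmax_cond _ (fun x : 'I_hi.+1 => lo < x) (fun x => logn 2 x)
                         (Ordinal (x_hi : x < hi.+1))).
Qed.

Lemma dlevel_le_trunc_log lo hi : dlevel lo hi <= trunc_log 2 hi.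
Proof.
apply/bigmax_leqP => x lo_x; apply: trunc_log_max => //.
rewrite (leq_trans (dvdn_leq _ (pfactor_dvdnn 2 x))) ?(leq_ltn_trans _ lo_x) //.
by rewrite -ltnS.
Qed.

Lemma dpoint_in lo hi : lo < hi -> lo < dpoint lo hi <= hi.
Proof.
move=> lo_hi; have P0 : 0 < 2 ^ dlevel lo hi by rewrite expn_gt0.
have [x /andP[lo_x x_hi] /dvdnP[q x_eq]] := dlevel_attained lo_hi.
rewrite ltn_ceil //= (leq_trans _ x_hi) // x_eq leq_mul2r ltn_divLR //.
by rewrite -x_eq lo_x orbT.
Qed.

Lemma dvdn_dpoint lo hi : 2 ^ dlevel lo hi %| dpoint lo hi.
Proof. exact: dvdn_mull. Qed.

Lemma dpoint_eq lo1 hi1 lo2 hi2 : lo1 < hi1 -> lo2 < hi2 -> lo1 < hi2 -> lo2 < hi1 ->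
  dlevel lo1 hi1 = dlevel lo2 hi2 -> dpoint lo1 hi1 = dpoint lo2 hi2.
Proof.
move=> lo_hi1 lo_hi2 lo1_hi2 lo2_hi1 same_level.
apply: (@dvdn_overlap_eq (2 ^ dlevel lo1 hi1) lo1 hi1 lo2 hi2) => //.
- by rewrite expn_gt0.
- exact: dpoint_in.
- exact: dpoint_in.
- exact: dvdn_dpoint.
- by rewrite same_level; exact: dvdn_dpoint.
- by move=> x; exact: dvdn_dlevelS.
- by rewrite same_level => x; exact: dvdn_dlevelS.
Qed.

Definition Rltb (x y : R) : bool := if Rlt_dec x y then true else false.

Lemma RltbP x y : reflect (Rlt x y) (Rltb x y).
Proof. by rewrite /Rltb; case: Rlt_dec => h; constructor. Qed.

Section Rank.
Variables (I : finType) (p : I -> R).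

Definition rank (x : R) : nat := #|[set j | Rltb (p j) x]|.

Lemma rank_le_card x : rank x <= #|I|.
Proof. exact: max_card. Qed.

Lemma le_rank x y : Rle x y -> rank x <= rank y.
Proof.
move=> le_xy; apply/subset_leq_card/subsetP => j.
by rewrite !inE => /RltbP lt_jx; apply/RltbP; lra.
Qed.

Lemma rank_lt j y : Rlt (p j) y -> rank (p j) < rank y.
Proof.
move=> lt_jy; apply/proper_card/properP; split.
  by apply/subsetP => k; rewrite !inE => /RltbP lt_kj; apply/RltbP; lra.
by exists j; rewrite !inE; [apply/RltbP | apply/RltbP; apply: Rlt_irrefl].
Qed.

Lemma rank_ltP j k : reflect (Rlt (p j) (p k)) (rank (p j) < rank (p k)).
Proof.
apply: (iffP idP) => [lt_rank|]; last exact: rank_lt.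
by case: (Rlt_le_dec (p j) (p k)) => // /le_rank; rewrite leqNgt lt_rank.
Qed.

End Rank.

Lemma open_boxes_meet d (a1 b1 a2 b2 : 'I_d -> R) :
  (forall i, Rlt (a1 i) (b1 i)) -> (forall i, Rlt (a2 i) (b2 i)) ->
  (exists x, in_open_box a1 b1 x /\ in_open_box a2 b2 x) <->
  (forall i, Rlt (a1 i) (b2 i) /\ Rlt (a2 i) (b1 i)).
Proof.
move=> ab1 ab2; split => [[x [in1 in2]] i | overlap].
  by have := in1 i; have := in2 i; lra.
exists (fun i => Rdiv (Rplus (Rmax (a1 i) (a2 i)) (Rmin (b1 i) (b2 i))) 2).
split=> i; have := overlap i; have := ab1 i; have := ab2 i;
  rewrite /Rmax /Rmin; do 2 case: Rle_dec; lra.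
Qed.

Section Boxes.
Variables (d : nat) (T : finType) (a b : T -> 'I_d -> R).
Hypothesis ab : forall v i, Rlt (a v i) (b v i).

Definition endpoint (i : 'I_d) (j : T * bool) : R := if j.2 then b j.1 i else a j.1 i.

Definition arank v i : nat := rank (endpoint i) (a v i).
Definition brank v i : nat := rank (endpoint i) (b v i).

Lemma arank_lt_brank v i : arank v i < brank v i.
Proof. exact: (@rank_lt _ (endpoint i) (v, false) _ (ab v i)). Qed.

Lemma box_graph_rank u v : box_graph a b u v <->
  u <> v /\ forall i, arank u i < brank v i /\ arank v i < brank u i.
Proof.
rewrite /box_graph open_boxes_meet //.
have rankE w w' i : Rlt (a w i) (b w' i) <-> arank w i < brank w' i.
  exact: (rwP (@rank_ltP _ (endpoint i) (w, false) (w', true))).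
by split=> [] [neq overlap]; split=> // i; have [? ?] := overlap i; split; apply/rankE.
Qed.

(* [inord] is harmless: [dlevel_le_trunc_log] and [rank_le_card] keep levels in
   range. *)
Definition level v : {ffun 'I_d -> 'I_(trunc_log 2 #|{: T * bool}|).+1} :=
  [ffun i => inord (dlevel (arank v i) (brank v i))].

Definition point v : {ffun 'I_d -> nat} := [ffun i => dpoint (arank v i) (brank v i)].

Lemma point_eq_of_level u v : box_graph a b u v -> level u = level v -> point u = point v.
Proof.
move=> /box_graph_rank[_ overlap] /ffunP same_level; apply/ffunP => i; rewrite !ffunE.
have [uv vu] := overlap i.
have level_lt w : dlevel (arank w i) (brank w i) < (trunc_log 2 #|{: T * bool}|).+1.
  by rewrite ltnS (leq_trans (dlevel_le_trunc_log _ _)) // leq_trunc_log // rank_le_card.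
move/(_ i): same_level; rewrite !ffunE => /(congr1 val); rewrite /= !inordK //.
exact: dpoint_eq (arank_lt_brank u i) (arank_lt_brank v i) uv vu.
Qed.

Lemma box_graph_of_point u v : u <> v -> point u = point v -> box_graph a b u v.
Proof.
move=> neq /ffunP same_point; apply/box_graph_rank; split => // i.
move/(_ i): same_point; rewrite !ffunE.
have := dpoint_in (arank_lt_brank u i); have := dpoint_in (arank_lt_brank v i).
lia.
Qed.

End Boxes.

Lemma exists_subset_card (T : finType) (S : {set T}) m : m <= #|S| ->
  exists2 K : {set T}, K \subset S & #|K| = m.
Proof.
elim: m => [|m IH] m_le; first by exists set0; rewrite ?sub0set ?cards0.
have [K KS cardK] := IH (ltnW m_le).
have /subsetPn[x xS xK] : ~~ (S \subset K).
  by apply/negP => /subset_leq_card; rewrite cardK leqNgt m_le.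
by exists (x |: K); rewrite ?subUset ?sub1set ?xS // cardsU1 xK cardK.
Qed.

Section Height.
Variables (T : finType) (lt : rel T).
Hypotheses (lt_irr : irreflexive lt) (lt_trans : transitive lt).

Definition chain (C : {set T}) : bool :=
  [forall x in C, forall y in C, (x != y) ==> lt x y || lt y x].

Lemma chainP (C : {set T}) :
  reflect {in C &, forall x y, x != y -> lt x y || lt y x} (chain C).
Proof.
apply: (iffP forall_inP) => [chC x y xC yC | chC x xC].
  by move/forall_inP/(_ y yC)/implyP: (chC x xC).
by apply/forall_inP => y yC; apply/implyP; apply: chC.
Qed.

Definition chain_below v (C : {set T}) : bool := chain C && [forall x in C, lt x v].

Definition height v : nat := \max_(C | chain_below v C) #|C|.

Lemma height_attained v : exists2 C, chain_below v C & height v = #|C|.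
Proof.
have below0 : chain_below v set0 by apply/andP; split; apply/forall_inP => x; rewrite inE.
have C_ne : 0 < #|[pred C : {set T} | chain_below v C]| by apply/card_gt0P; exists set0.
have [C C_below] := eq_bigmax_cond (fun C : {set T} => #|C|) C_ne.
by rewrite /height (eq_bigl [in [pred C : {set T} | chain_below v C]]) // => ->; exists C.
Qed.

Lemma height_lt u v : lt u v -> height u < height v.
Proof.
move=> lt_uv; have [C /andP[/chainP chC /forall_inP C_lt] ->] := height_attained u.
have uC : u \notin C by apply/negP => /C_lt; rewrite lt_irr.
suff below : chain_below v (u |: C).
  have := @leq_bigmax_cond _ (chain_below v) (fun C => #|C|) _ below.
  by rewrite cardsU1 uC.
apply/andP; split.
  apply/chainP => x y /setU1P[-> | xC] /setU1P[-> | yC]; rewrite ?eqxx //.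
  - by rewrite C_lt ?orbT.
  - by rewrite C_lt.
  - exact: chC.
apply/forall_inP => x /setU1P[-> // | xC]; exact: lt_trans (C_lt x xC) lt_uv.
Qed.

End Height.

Lemma colorable_card (T C : finType) (G : T -> T -> Prop) (f : T -> C) :
  (forall u v, G u v -> f u <> f v) -> colorable G #|C|.
Proof.
by move=> proper; exists (fun v => enum_rank (f v)) => u v /proper + /enum_rank_inj.
Qed.

Section Colouring.
Variables (d : nat) (T : finType) (a b : T -> 'I_d -> R).
Variables (lt : rel T) (H : T -> T -> Prop) (s : nat).
Hypotheses (ab : forall v i, Rlt (a v i) (b v i))
  (lt_irr : irreflexive lt) (lt_trans : transitive lt)
  (Hlt : forall x y, H x y <-> lt x y || lt y x)
  (no_clique : ~ has_clique (graphI (box_graph a b) H) s).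

Definition lt_same_point u v : bool := lt u v && (point a b u == point a b v).

Lemma lt_same_point_irr : irreflexive lt_same_point.
Proof. by move=> u; rewrite /lt_same_point lt_irr. Qed.

Lemma lt_same_point_trans : transitive lt_same_point.
Proof.
move=> v u w; rewrite /lt_same_point => /andP[lt_uv /eqP ->] /andP[lt_vw ->].
by rewrite (lt_trans lt_uv lt_vw).
Qed.

Lemma chain_same_point_small C : chain lt_same_point C -> #|C| < s.
Proof.
move/chainP=> chC; rewrite ltnNge; apply/negP => /exists_subset_card[K KC cardK].
apply: no_clique; exists K; split => // x y xK yK neq.
have [same_point comparable] : point a b x = point a b y /\ lt x y || lt y x.
  have /orP[] := chC x y (subsetP KC x xK) (subsetP KC y yK) neq;
    by move=> /andP[-> /eqP ->]; rewrite ?orbT.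
split; last exact/Hlt.
by have := box_graph_of_point ab (elimN eqP neq) same_point.
Qed.

Lemma height_same_point_small v : height lt_same_point v < s.
Proof.
by have [C /andP[/chain_same_point_small ? _] ->] := height_attained lt_same_point v.
Qed.

Lemma box_comparability_colorable :
  colorable (graphI (box_graph a b) H) ((trunc_log 2 #|{: T * bool}|).+1 ^ d * s).
Proof.
set K := (trunc_log 2 _).+1.
have -> : (K ^ d * s = #|{: {ffun 'I_d -> 'I_K} * 'I_s}|)%N.
  by rewrite card_prod card_ffun !card_ord.
pose colour v := (level a b v, Ordinal (height_same_point_small v)).
apply: (@colorable_card _ ({ffun 'I_d -> 'I_K} * 'I_s)%type _ colour).
move=> u v [adj /Hlt comparable] [same_level same_height].
have same_point := point_eq_of_level ab adj same_level.
have lt_height x y : lt x y -> point a b x = point a b y ->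
    height lt_same_point x != height lt_same_point y.
  move=> lt_xy same; rewrite neq_ltn height_lt //.
  - exact: lt_same_point_irr.
  - exact: lt_same_point_trans.
  - by rewrite /lt_same_point lt_xy same eqxx.
case/orP: comparable => [lt_uv | lt_vu].
- by have := lt_height u v lt_uv same_point; rewrite same_height eqxx.
- by have := lt_height v u lt_vu (esym same_point); rewrite same_height eqxx.
Qed.

End Colouring.

Section LogBound.
Local Open Scope R_scope.

Lemma INR_expn m k : INR (m ^ k)%N = INR m ^ k.
Proof.
elim: k => [|k IH]; first by rewrite expn0.
by rewrite expnS -multE mult_INR IH.
Qed.

Lemma ln_le x y : 0 < x -> x <= y -> ln x <= ln y.
Proof.
move=> x0 /Rle_lt_or_eq_dec[lt_xy | ->]; last exact: Rle_refl.
exact/Rlt_le/ln_increasing.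
Qed.

Lemma INR_trunc_log_le_ln n :
  (2 <= n)%N -> INR (trunc_log 2 (n * 2)).+1 <= 6 * ln (INR n).
Proof.
move=> n2; set k := (trunc_log 2 (n * 2)).+1.
have pow_k : (2 ^ k <= n ^ 3)%N.
  have t_le : (2 ^ trunc_log 2 (n * 2) <= n * 2)%N by apply: trunc_logP; lia.
  have n_cube : (4 * n <= n ^ 3)%N.
    have n_sq : (4 <= n * n)%N by nia.
    rewrite !expnS expn0 muln1 mulnA; nia.
  rewrite /k expnS; set p := (2 ^ _)%N in t_le *; lia.
have two : INR 2 = 2 by rewrite /=; lra.
have n_pos : 0 < INR n by apply: lt_0_INR; apply/ltP; lia.
have pow_R : 2 ^ k <= INR n ^ 3.
  by rewrite -two -!INR_expn; apply/le_INR/leP.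
have := ln_le (pow_lt 2 k Rlt_0_2) pow_R.
rewrite !ln_pow //; last lra.
have three : INR 3 = 3 by rewrite /=; lra.
rewrite three; have := ln_lt_2; have := pos_INR k; nra.
Qed.

Lemma INR_le_pow_mul (chi k s d : nat) (L : R) :
  (chi <= k ^ d * s)%N -> INR k <= 6 * L -> INR chi <= 6 ^ d * INR s * L ^ d.
Proof.
move=> chi_le k_le.
have k_pow : INR k ^ d <= 6 ^ d * L ^ d.
  by rewrite -Rpow_mult_distr; apply: pow_incr; split => //; exact: pos_INR.
apply: Rle_trans (_ : INR k ^ d * INR s <= _).
  by rewrite -INR_expn -mult_INR multE; apply/le_INR/leP.
have := Rmult_le_compat_r (INR s) _ _ (pos_INR s) k_pow; lra.
Qed.

End LogBound.

Theorem lemma3p2 :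
  forall d : nat, (0 < d)%N ->
  exists c : R, Rlt 0 c /\
    forall (T : finType) (a b : T -> 'I_d -> R),
      (forall (v : T) (i : 'I_d), Rlt (a v i) (b v i)) ->
      (2 <= #|T|)%N ->
      forall H : T -> T -> Prop, comparability_graph H ->
      forall s : nat, ~ has_clique (graphI (box_graph a b) H) s ->
      forall chi : nat, is_chromatic_number (graphI (box_graph a b) H) chi ->
        Rle (INR chi) (Rmult (Rmult c (INR s)) (pow (ln (INR #|T|)) d)).
Proof.
move=> d _; exists (pow 6 d); split; first by apply: pow_lt; lra.
move=> T a b ab n2 H [lt [lt_irr [lt_trans Hlt]]] s no_clique chi [_ chi_min].
have colorable := box_comparability_colorable ab lt_irr lt_trans Hlt no_clique.
apply: INR_le_pow_mul (chi_min _ colorable) _.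
by rewrite card_prod card_bool; exact: INR_trunc_log_le_ln.
Qed.
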